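(* In an $a^2bc$-tiling, every vertex of degree $3$ is one of $\alpha^3$, $\alpha\beta^2$, $\alpha\gamma^2$, $\beta\gamma\delta$.
   Context: An $a^2bc$-quadrilateral is a simple spherical quadrilateral with edges $a,a,b,c$ in cyclic order, $a,b,c$ pairwise distinct; $\alpha$ = angle between the two $a$-edges; $\beta$ = angle between an $a$-edge and the $b$-edge; $\delta$ = angle between the $b$-edge and the $c$-edge; $\gamma$ = angle between the $c$-edge and an $a$-edge. An $a^2bc$-tiling is an edge-to-edge tiling of the sphere by congruent copies of such a quadrilateral with all vertices of degree $\ge3$. A vertex $\alpha^k\beta^l\gamma^m\delta^n$ has exactly $k$ copies of $\alpha$, etc. *)

(* Combinatorial (dart / rotation-system) model of an
   edge-to-edge tiling of the sphere by congruent a^2bc-quadrilaterals. *)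
From HB Require Import structures.
From mathcomp Require Import all_boot all_order all_algebra all_fingroup.
Set Implicit Arguments.
Unset Strict Implicit.
Unset Printing Implicit Defensive.
Import Order.TTheory GRing.Theory Num.Theory.

(* The four angles (corners) of the quadrilateral Q with edges a,a,b,c in
   cyclic order: alpha between the two a-edges, beta between an a-edge and
   the b-edge, delta between the b-edge and the c-edge, gamma between the
   c-edge and an a-edge. *)
Inductive angle := alpha | beta | gamma | delta.

Definition angle_eqb (x y : angle) : bool :=
  match x, y with
  | alpha, alpha | beta, beta | gamma, gamma | delta, delta => true
  | _, _ => false
  end.

Lemma angle_eqP : Equality.axiom angle_eqb.
Proof. by case; case; constructor. Qed.

HB.instance Definition _ := hasDecEq.Build angle angle_eqP.

Definition qadj (x y : angle) : bool :=
  match x, y with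
  | alpha, beta | beta, alpha | beta, delta | delta, beta
  | delta, gamma | gamma, delta | gamma, alpha | alpha, gamma => true
  | _, _ => false
  end.

Definition qlen (R : Type) (a b c : R) (x y : angle) : R :=
  match x, y with
  | alpha, beta | beta, alpha => a
  | beta, delta | delta, beta => b
  | delta, gamma | gamma, delta => c
  | gamma, alpha | alpha, gamma => a
  | _, _ => a (* irrelevant: non-adjacent corners *)
  end.

Local Open Scope group_scope.

(* Darts D; [s] = rotation around vertices (vertices = s-orbits),
   [e] = fixed-point-free involution (edges = e-orbits),
   faces = orbits of f := e * s  (f x = s (e x)).
   The dart y is identified with the corner at the vertex of y lying between
   the edges of (s^-1 y) and y; this corner belongs to the face of y, and the
   edge of y joins the corners y and f y of that face.
   [ang y] = corner of Q to which the tile-corner y corresponds under the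
   congruence of the tile with Q; [len y] = length of the edge of y. *)
Definition a2bc_tiling (R : realFieldType) (D : finType) (s e : {perm D})
    (ang : D -> angle) (len : D -> R) (a b c : R) : Prop :=
  ((0 < a)%R /\ (0 < b)%R /\ (0 < c)%R) /\
      (a != b /\ b != c /\ a != c) /\
      (forall x, e (e x) = x /\ e x != x) /\
      (forall x, len (e x) = len x) /\
      (* every tile is a quadrilateral congruent to Q: its four corners are
         matched bijectively with the corners of Q, preserving adjacency,
         and each edge has the length of the corresponding edge of Q *)
      (forall x, ((e * s) ^+ 4) x = x
                 /\ uniq [:: ang x; ang ((e * s) x); ang (((e * s) ^+ 2) x);
                             ang (((e * s) ^+ 3) x)]
                 /\ qadj (ang x) (ang ((e * s) x))
                 /\ len x = qlen a b c (ang x) (ang ((e * s) x))) /\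
      (forall x, 3 <= #|porbit s x|)%N /\
      (* the map is connected and of genus 0 (a tiling of the sphere) *)
      (forall x y, exists g, g \in <<[set s; e]>> /\ g x = y)
      /\ (#|porbits s| + #|porbits (e * s)| = #|porbits e| + 2)%N.

Definition nang (D : finType) (s : {perm D}) (ang : D -> angle) (x : D)
    (X : angle) : nat :=
  #|[set y in porbit s x | ang y == X]|.

(* vertex type alpha^k beta^l gamma^m delta^n, as (k, l, m, n) *)
Definition vtype (D : finType) (s : {perm D}) (ang : D -> angle) (x : D)
    : nat * nat * nat * nat :=
  (nang s ang x alpha, nang s ang x beta, nang s ang x gamma, nang s ang x delta).

From HB Require Import structures.
From mathcomp Require Import all_boot all_order all_algebra all_fingroup.
From mathcomp Require Import zify.

(* Double counting at a vertex: each edge at the vertex bounds exactly two of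
   the corners around it, and a corner of angle X is bounded by edges of the
   lengths listed in [corner_sides a b c X].  Counting the b-, c- and a-edges
   this way gives [#beta + #delta = 2 #b], [#gamma + #delta = 2 #c] and
   [2 #alpha + #beta + #gamma = 2 #a]; moreover an alpha-corner is bounded by
   two distinct a-edges, so [#a >= 2] as soon as alpha occurs.  For a vertex
   of degree 3 these constraints leave only the four listed types. *)

Set Implicit Arguments.
Unset Strict Implicit.
Unset Printing Implicit Defensive.

Definition corner_sides (T : Type) (a b c : T) (X : angle) : seq T :=
  match X with
  | alpha => [:: a; a]
  | beta => [:: a; b]
  | gamma => [:: a; c]
  | delta => [:: b; c]
  end.

Lemma perm_pair (T : eqType) (x y : T) : perm_eq [:: x; y] [:: y; x].
Proof. by rewrite (perm_catC [:: x]). Qed.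

Lemma qlen_corner_sides (T : eqType) (a b c : T) (u X v : angle) :
  qadj u X -> qadj X v -> u != v ->
  perm_eq [:: qlen a b c u X; qlen a b c X v] (corner_sides a b c X).
Proof.
by case: u; case: X; case: v => //= _ _ _; rewrite ?perm_refl ?perm_pair.
Qed.

Lemma count_corner_sides_a (T : eqType) (a b c : T) (X : angle) :
  b != a -> c != a ->
  count (pred1 a) (corner_sides a b c X)
    = (X == alpha).*2 + (X == beta) + (X == gamma).
Proof. by move=> /negbTE ba /negbTE ca; case: X; rewrite /= ?ba ?ca ?eqxx. Qed.

Lemma count_corner_sides_b (T : eqType) (a b c : T) (X : angle) :
  a != b -> c != b ->
  count (pred1 b) (corner_sides a b c X) = (X == beta) + (X == delta).
Proof. by move=> /negbTE ab /negbTE cb; case: X; rewrite /= ?ab ?cb ?eqxx. Qed.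

Lemma count_corner_sides_c (T : eqType) (a b c : T) (X : angle) :
  a != c -> b != c ->
  count (pred1 c) (corner_sides a b c X) = (X == gamma) + (X == delta).
Proof. by move=> /negbTE ac /negbTE bc; case: X; rewrite /= ?ac ?bc ?eqxx. Qed.

Section PorbitCounting.

Variables (D : finType) (s : {perm D}).

Lemma mem_porbit_image (x y : D) : (s y \in porbit s x) = (y \in porbit s x).
Proof.
have -> : s y = (s ^+ 1)%g y by rewrite expg1.
by rewrite -!(porbit_sym s x) porbit_perm.
Qed.

Lemma sum_porbit_image (x : D) (F : D -> nat) :
  \sum_(y in porbit s x) F (s y) = \sum_(y in porbit s x) F y.
Proof.
rewrite [RHS](reindex_inj (@perm_inj _ s)) /=.
by apply: eq_bigl => y; rewrite mem_porbit_image.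
Qed.

Lemma card_porbit_predE (x : D) (P : pred D) :
  #|[set y in porbit s x | P y]| = \sum_(y in porbit s x) P y.
Proof.
by rewrite -sum1dep_card big_mkcondr; apply: eq_bigr => y _; case: (P y).
Qed.

Lemma porbit_fixed (z : D) : s z = z -> porbit s z = [set z].
Proof.
move=> sz; apply/setP => y; rewrite inE.
apply/porbitP/eqP => [[i ->] | ->]; first by rewrite permX iter_fix.
by exists 0; rewrite expg0 perm1.
Qed.

End PorbitCounting.

Lemma sum_nang (D : finType) (s : {perm D}) (ang : D -> angle) (x : D) :
  nang s ang x alpha + nang s ang x beta + nang s ang x gamma
    + nang s ang x delta = #|porbit s x|.
Proof.
rewrite /nang !card_porbit_predE -!big_split /= -sum1_card.
by apply: eq_bigr => y _; case: (ang y).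
Qed.

(* Each dart [y] at the vertex of [x] contributes its edge, of length [len y]. *)
Definition nedge (T : eqType) (D : finType) (s : {perm D}) (len : D -> T)
    (x : D) (l : T) : nat :=
  #|[set y in porbit s x | len y == l]|.

Section VertexCounting.

Variables (T : eqType) (D : finType) (s : {perm D}).
Variables (ang : D -> angle) (len : D -> T) (a b c : T).

(* The corner [s z] lies between the edges of the darts [z] and [s z]. *)
Hypothesis corner_edges :
  forall z, perm_eq [:: len z; len (s z)] (corner_sides a b c (ang (s z))).

Lemma sum_count_corner_sides (l : T) (x : D) :
  \sum_(y in porbit s x) count (pred1 l) (corner_sides a b c (ang y))
    = 2 * nedge s len x l.
Proof.
rewrite -(sum_porbit_image _ _ (fun y => count _ (corner_sides a b c (ang y)))).
under eq_bigr => z _ do rewrite -(seq.permP (corner_edges z)) /= addn0.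
rewrite big_split /= (sum_porbit_image _ _ (fun y => len y == l : nat)).
by rewrite addnn -mul2n /nedge card_porbit_predE.
Qed.

Lemma nang_alpha_beta_gamma (x : D) : b != a -> c != a ->
  2 * nang s ang x alpha + nang s ang x beta + nang s ang x gamma
    = 2 * nedge s len x a.
Proof.
move=> ba ca; rewrite /nang !card_porbit_predE big_distrr -!big_split /=.
under eq_bigr => y _ do rewrite mul2n -(count_corner_sides_a (ang y) ba ca).
exact: sum_count_corner_sides.
Qed.

Lemma nang_beta_delta (x : D) : a != b -> c != b ->
  nang s ang x beta + nang s ang x delta = 2 * nedge s len x b.
Proof.
move=> ab cb; rewrite /nang !card_porbit_predE -big_split /=.
under eq_bigr => y _ do rewrite -(count_corner_sides_b (ang y) ab cb).
exact: sum_count_corner_sides.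
Qed.

Lemma nang_gamma_delta (x : D) : a != c -> b != c ->
  nang s ang x gamma + nang s ang x delta = 2 * nedge s len x c.
Proof.
move=> ac bc; rewrite /nang !card_porbit_predE -big_split /=.
under eq_bigr => y _ do rewrite -(count_corner_sides_c (ang y) ac bc).
exact: sum_count_corner_sides.
Qed.

Lemma nedge_alpha (x : D) : 1 < #|porbit s x| ->
  0 < nang s ang x alpha -> 1 < nedge s len x a.
Proof.
move=> deg_gt1 /card_gt0P[y]; rewrite inE => /andP[xy /eqP ang_y].
set z := (s^-1)%g y.
have sz : s z = y by rewrite permKV.
have xz : z \in porbit s x by rewrite -mem_porbit_image sz.
have len_a u : u \in [:: len z; len (s z)] -> u == a.
  by rewrite (perm_mem (corner_edges z)) sz ang_y !inE orbb.
apply/card_gt1P; exists z, (s z); rewrite !inE mem_porbit_image xz.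
rewrite !len_a ?inE ?eqxx ?orbT //; split=> //.
have orbit_z : porbit s z = porbit s x by apply/eqP; rewrite eq_porbit_mem.
apply: contraTneq deg_gt1 => /esym/porbit_fixed fixed_z.
by rewrite -orbit_z fixed_z cards1.
Qed.

End VertexCounting.

Lemma tiling_corner_edges (R : realFieldType) (D : finType) (s e : {perm D})
    (ang : D -> angle) (len : D -> R) (a b c : R) :
  a2bc_tiling s e ang len a b c ->
  forall z, perm_eq [:: len z; len (s z)] (corner_sides a b c (ang (s z))).
Proof.
move=> [_ [_ [e_inv [len_e [face _]]]]] z.
have f_ez : (e * s)%g (e z) = s z by rewrite permM (e_inv z).1.
have f2_ez : ((e * s) ^+ 2)%g (e z) = (e * s)%g (s z).
  by rewrite expgS expg1 !permM (e_inv z).1.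
have [_ [uniq_ez [adj_ez len_ez]]] := face (e z).
have [_ [_ [adj_sz len_sz]]] := face (s z).
rewrite f_ez in uniq_ez adj_ez len_ez.
have neq : ang (e z) != ang ((e * s)%g (s z)).
  by move: uniq_ez; rewrite /= !inE f2_ez => /andP[/norP[_ /norP[]]].
by rewrite -len_e len_ez len_sz qlen_corner_sides.
Qed.

Lemma degree3_vertex_counts (k l m n p q r : nat) :
  k + l + m + n = 3 -> 2 * k + l + m = 2 * p -> l + n = 2 * q ->
  m + n = 2 * r -> (0 < k -> 1 < p) ->
  (k, l, m, n) = (3, 0, 0, 0) \/ (k, l, m, n) = (1, 2, 0, 0)
  \/ (k, l, m, n) = (1, 0, 2, 0) \/ (k, l, m, n) = (0, 1, 1, 1).
Proof.
move=> *.
have : k = 3 /\ l = 0 /\ m = 0 /\ n = 0 \/ k = 1 /\ l = 2 /\ m = 0 /\ n = 0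
    \/ k = 1 /\ l = 0 /\ m = 2 /\ n = 0 \/ k = 0 /\ l = 1 /\ m = 1 /\ n = 1.
  by lia.
by case=> [|[|[]]] [-> [-> [-> ->]]]; auto.
Qed.

Theorem lemma9 (R : realFieldType) (D : finType) (s e : {perm D})
    (ang : D -> angle) (len : D -> R) (a b c : R) :
  a2bc_tiling s e ang len a b c ->
  forall x : D, #|porbit s x| = 3%N ->
    vtype s ang x = (3, 0, 0, 0)%N      (* alpha^3 *)
    \/ vtype s ang x = (1, 2, 0, 0)%N   (* alpha beta^2 *)
    \/ vtype s ang x = (1, 0, 2, 0)%N   (* alpha gamma^2 *)
    \/ vtype s ang x = (0, 1, 1, 1)%N.  (* beta gamma delta *)
Proof.
move=> tiling x deg3.
have corners := tiling_corner_edges tiling.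
have [_ [[ab [bc ac]] _]] := tiling.
have [ba ca cb] : [/\ b != a, c != a & c != b] by split; rewrite eq_sym.
apply: (degree3_vertex_counts (p := nedge s len x a) (q := nedge s len x b)
                              (r := nedge s len x c)).
- by rewrite sum_nang.
- exact: (nang_alpha_beta_gamma corners x ba ca).
- exact: (nang_beta_delta corners x ab cb).
- exact: (nang_gamma_delta corners x ac bc).
- by apply: (nedge_alpha corners); rewrite deg3.
Qed.
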